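(* Let $a,b\in C^0(\mathbb{R})$ be even and positive, and let $G\in C^0(\mathbb{R})$ be even with $G(s)\ge G(M)=0$ for all $s\in\mathbb{R}$ and $G(s)>0$ for $s\in[0,M)$, for some $M>0$. Let $L>0$, $m\ge0$ and $t\in[0,L)$. Then $$\inf_{v\in H^1_m((-L,L))}\mathcal{E}(v,(-L,L))\le \frac{M^2+m^2}{\int_t^L 1/a}+2G_1\int_t^L b,$$ where $G_1:=\sup_{s\in(-m,\overline M)}G(s)$ and $\overline M:=\max\{m,M\}$.
   Context: $H^1_m((-L,L)):=\{u\in H^1((-L,L)):u(-L)=-m,\ u(L)=m\}$ and $\mathcal{E}(u,(-L,L)):=\int_{-L}^L\{\tfrac12(u')^2a(x)+G(u)b(x)\}\,dx$. *)

From HB Require Import structures.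
From mathcomp Require Import all_boot all_order all_algebra.
From mathcomp Require Import all_classical all_reals all_analysis.
Set Implicit Arguments. Unset Strict Implicit. Unset Printing Implicit Defensive.
Import Order.TTheory GRing.Theory Num.Theory.
Import numFieldNormedType.Exports.
Local Open Scope classical_set_scope.
Local Open Scope ring_scope.

(* H^1_m((-L,L)) in the standard one-dimensional form (Brezis, Thm 8.2):
   u (its continuous representative) is an indefinite integral of some
   g in L^2(-L,L), which is then the weak derivative u' of u, with the
   boundary values u(-L) = -m, u(L) = m. *)
Definition H1m (R : realType) (L m : R) (u g : R -> R) : Prop :=
  measurable_fun `[-L, L] g /\
      (@lebesgue_measure R).-integrable `[-L, L] (fun x => (g x)%:E) /\
      (@lebesgue_measure R).-integrable `[-L, L] (fun x => ((g x) ^+ 2)%:E) /\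
      (forall x, -L <= x <= L ->
         u x = - m + \int[@lebesgue_measure R]_(y in `[-L, x]) g y) /\
      u (- L) = - m /\ u L = m.

Definition energy (R : realType) (a b G : R -> R) (L : R) (u g : R -> R)
  : \bar R :=
  (\int[@lebesgue_measure R]_(x in `[(- L)%R, L])
      ((2^-1 * (g x) ^+ 2 * a x + G (u x) * b x)%:E))%E.

Definition inf_energy (R : realType) (a b G : R -> R) (L m : R) : \bar R :=
  ereal_inf [set E | exists u g, H1m L m u g /\ E = energy a b G L u g].

From HB Require Import structures.
From mathcomp Require Import all_boot all_order all_algebra.
From mathcomp Require Import all_classical all_reals all_analysis.
From mathcomp Require Import measurable_realfun.
From mathcomp Require Import ring lra.
Import Order.TTheory GRing.Theory Num.Theory.
Import numFieldNormedType.Exports.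
Local Open Scope classical_set_scope.
Local Open Scope ring_scope.

(** The bound is the energy of one explicit competitor [u] with [I := \int_t^L 1/a]:
    [u] rises from [-m] to [M] on [[-L,-t]], stays at [M] on [[-t,t]], where
    [G(M) = 0] kills the integrand, and moves back to [m] on [[t,L]].  On the two
    ramps [u' = c/a] with [c = (M+m)/I] resp. [c = (m-M)/I], i.e. [u] is affine in
    the variable [\int 1/a]; each ramp then costs [c^2 I/2] in the gradient term,
    and [((M+m)^2 + (m-M)^2)/(2I) = (M^2+m^2)/I].  Evenness of [a] and [b] moves the
    left ramp onto [[t,L]], and [G(u) <= G_1] because [u] takes its values in
    [[-m, max(m,M)]]. *)

Section continuous_integral.
Context {R : realType}.
Local Notation mu := (@lebesgue_measure R).
Implicit Types (f g : R -> R) (x y z : R).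

Lemma continuous_mul f g : continuous f -> continuous g ->
  continuous (fun x => f x * g x).
Proof. by move=> cf cg x; exact: (continuousM (cf x) (cg x)). Qed.

Lemma continuous_add f g : continuous f -> continuous g ->
  continuous (fun x => f x + g x).
Proof. by move=> cf cg x; exact: (continuousD (cf x) (cg x)). Qed.

Lemma continuous_cmul (c : R) f : continuous f -> continuous (fun x => c * f x).
Proof. by apply: continuous_mul => x; exact: cst_continuous. Qed.

Lemma continuous_integrable_itv f x y : continuous f ->
  mu.-integrable `[x, y] (EFin \o f).
Proof.
move=> cf; apply: continuous_compact_integrable; first exact: segment_compact.
exact: continuous_subspaceT.
Qed.

Lemma continuous_integral_itvE f x y : continuous f ->
  (\int[mu]_(z in `[x, y]) (f z)%:E)%E = (\int[mu]_(z in `[x, y]) f z)%:E.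
Proof.
move=> cf; rewrite /Rintegral fineK //; apply: integrable_fin_num => //.
exact: continuous_integrable_itv.
Qed.

Lemma ge0_le_Rintegral_itv f x y z : continuous f -> (forall w, 0 <= f w) ->
  x <= y <= z -> \int[mu]_(w in `[x, y]) f w <= \int[mu]_(w in `[x, z]) f w.
Proof.
move=> cf f0 /andP[xy yz].
rewrite -subr_ge0 (@Rintegral_itvB _ f (BLeft x) (BRight z) y) ?bnd_simp //.
- exact: Rintegral_ge0.
- exact: continuous_integrable_itv.
Qed.

Lemma Rintegral_itv_gt0 f x y : continuous f -> (forall z, 0 < f z) ->
  x < y -> 0 < \int[mu]_(z in `[x, y]) f z.
Proof.
move=> cf f0 xy.
have [c _ fc_min] := EVT_min (ltW xy) (continuous_subspaceT cf).
apply: (@lt_le_trans _ _ (\int[mu]_(z in `[x, y]) (cst (f c)) z)).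
  have mu_itv : fine (mu `[x, y]) = y - x.
    by rewrite lebesgue_measure_itv /= lte_fin xy.
  by rewrite Rintegral_cst // mu_itv mulr_gt0 // subr_gt0.
apply: le_Rintegral => //; apply: continuous_integrable_itv => //.
exact: cst_continuous.
Qed.

Lemma Rintegral_itvN f x y : continuous f -> (forall z, f (- z) = f z) ->
  x <= y -> \int[mu]_(z in `[- y, - x]) f z = \int[mu]_(z in `[x, y]) f z.
Proof.
move=> cf f_even xy; rewrite /Rintegral integration_by_substitution_oppr //.
  by congr fine; apply: eq_integral => z _; rewrite /= f_even.
exact: continuous_subspaceT.
Qed.

Lemma ge0_integral_itv_split {f : R -> R} {l : itv_bound R} {y z : R} :
  (forall w, 0 <= f w) -> (l <= BRight y)%O -> y <= z ->
  measurable_fun [set` Interval l (BRight z)] f ->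
  (\int[mu]_(w in [set` Interval l (BRight z)]) (f w)%:E =
   \int[mu]_(w in [set` Interval l (BRight y)]) (f w)%:E
   + \int[mu]_(w in `]y, z]) (f w)%:E)%E.
Proof.
move=> f0 ly yz mf.
rewrite (@itv_bndbnd_setU _ _ l (BRight y) (BRight z)) ?bnd_simp //.
rewrite ge0_integral_setU //=.
- by rewrite -itv_bndbnd_setU ?bnd_simp //; exact/measurable_EFinP.
- by move=> w _; rewrite lee_fin.
- apply/disj_setPS => w [] /=; rewrite !in_itv /= => /andP[_ wy] /andP[yw _].
  by have := lt_le_trans yw wy; rewrite ltxx.
Qed.

End continuous_integral.

Lemma closure_itv_oo {R : realType} (x y : R) : x < y ->
  closure `]x, y[ = `[x, y]%classic.
Proof.
move=> xy; have r_gt0 : 0 < (y - x) / 2 by rewrite divr_gt0 // subr_gt0.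
have lo : (x + y) / 2 - (y - x) / 2 = x by lra.
have hi : (x + y) / 2 + (y - x) / 2 = y by lra.
have -> : `]x, y[%classic = ball ((x + y) / 2) ((y - x) / 2) :> set R.
  by rewrite ball_itv lo hi.
by rewrite closure_ballE closed_ball_itv // lo hi.
Qed.

Lemma continuous_le_sup_itv_oo {R : realType} (G : R -> R) (x y s : R) :
  continuous G -> x < y -> x <= s <= y -> G s <= sup [set G z | z in `]x, y[].
Proof.
move=> cG xy sxy; set S := [set G z | z in `]x, y[].
have S_sup : has_sup S.
  split.
    by exists (G ((x + y) / 2)), ((x + y) / 2); rewrite //= in_itv /=; lra.
  have [c _ Gc_max] := EVT_max (ltW xy) (continuous_subspaceT cG).
  exists (G c) => _ [z + <-]; rewrite /= !in_itv /= => /andP[xz zy].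
  by apply: Gc_max; rewrite in_itv /= (ltW xz) (ltW zy).
have closed_sublevel : closed (G @^-1` [set r | r <= sup S]).
  by move/continuous_closedP : cG; apply; exact: closed_le.
have itv_sublevel : `]x, y[ `<=` G @^-1` [set r | r <= sup S].
  by move=> z xzy; apply: sup_upper_bound S_sup _ _; exists z.
suff : (G @^-1` [set r | r <= sup S]) s by [].
rewrite ((closure_id _).1 closed_sublevel); apply: (closureS itv_sublevel).
by rewrite closure_itv_oo //= in_itv.
Qed.

Section competitor.
Context {R : realType} (a : R -> R) (L t M m : R).
Hypotheses (ca : continuous a) (a_even : forall x, a (- x) = a x).
Hypothesis a_gt0 : forall x, 0 < a x.
Hypothesis t_itv : 0 <= t < L.
Local Notation mu := (@lebesgue_measure R).

Let k x := (a x)^-1.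

Let k_continuous : continuous k.
Proof. by move=> x; apply: continuousV; [rewrite gt_eqF | exact: ca]. Qed.

Let k_gt0 x : 0 < k x.
Proof. by rewrite invr_gt0. Qed.

Let k_ge0 x : 0 <= k x.
Proof. exact: ltW. Qed.

Let k_even x : k (- x) = k x.
Proof. by rewrite /k a_even. Qed.

Let I := \int[mu]_(x in `[t, L]) k x.

Let I_gt0 : 0 < I.
Proof. by have /andP[_ tL] := t_itv; exact: Rintegral_itv_gt0. Qed.

Let Rintegral_k_left : \int[mu]_(x in `[- L, - t]) k x = I.
Proof. by have /andP[_ tL] := t_itv; apply: Rintegral_itvN => //; exact: ltW. Qed.

Let cl := (M + m) / I.
Let cr := (m - M) / I.

Definition competitor_slope x :=
  if x <= - t then cl * k x else if t < x then cr * k x else 0.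

Definition competitor x := - m + \int[mu]_(y in `[- L, x]) competitor_slope y.

Lemma measurable_competitor_slope : measurable_fun setT competitor_slope.
Proof.
have mk c : measurable_fun setT (fun x => c * k x).
  by apply: continuous_measurable_fun; exact: continuous_cmul.
apply: measurable_fun_ifT => //.
  exact: (@measurable_fun_ler _ _ _ _ id (cst (- t))).
apply: measurable_fun_ifT => //.
exact: (@measurable_fun_ltr _ _ _ _ (cst t) id).
Qed.

Lemma competitor_slope_integrable :
  mu.-integrable `[- L, L] (EFin \o competitor_slope).
Proof.
apply: (@le_integrable _ _ _ mu _ _ _ (EFin \o (fun x => (`|cl| + `|cr|) * k x))).
- by [].
- by apply/measurable_EFinP; exact: measurable_funS measurable_competitor_slope.
- move=> x _; rewrite /= lee_fin [X in _ <= X]ger0_norm ?mulr_ge0 ?addr_ge0 //.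
  rewrite /competitor_slope.
  case: ifP => _; [|case: ifP => _].
  + by rewrite normrM (gtr0_norm (k_gt0 x)) ler_pM2r // lerDl.
  + by rewrite normrM (gtr0_norm (k_gt0 x)) ler_pM2r // lerDr.
  + by rewrite normr0 mulr_ge0 ?addr_ge0.
- by apply: continuous_integrable_itv; exact: continuous_cmul.
Qed.

Lemma competitor_slope_sqr_integrable :
  mu.-integrable `[- L, L] (fun x => (competitor_slope x ^+ 2)%:E).
Proof.
apply: (@le_integrable _ _ _ mu _ _ _
  (EFin \o (fun x => (cl ^+ 2 + cr ^+ 2) * (k x * k x)))).
- by [].
- apply/measurable_EFinP/measurable_funX.
  exact: measurable_funS measurable_competitor_slope.
- move=> x _; rewrite /= lee_fin ger0_norm ?sqr_ge0 //.
  rewrite ger0_norm ?mulr_ge0 ?addr_ge0 ?sqr_ge0 ?k_ge0 //.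
  rewrite /competitor_slope; case: ifP => _; [|case: ifP => _].
  + by rewrite exprMn -expr2 ler_pM2r ?exprn_gt0 // lerDl sqr_ge0.
  + by rewrite exprMn -expr2 ler_pM2r ?exprn_gt0 // lerDr sqr_ge0.
  + by rewrite expr0n mulr_ge0 ?addr_ge0 ?sqr_ge0 ?mulr_ge0.
- by apply/continuous_integrable_itv/continuous_cmul; exact: continuous_mul.
Qed.

Let competitor_slope_integrable_itv (x y : R) : - L <= x -> y <= L ->
  mu.-integrable `[x, y] (EFin \o competitor_slope).
Proof.
move=> Lx yL; apply: integrableS competitor_slope_integrable => //.
by apply: subset_itv; rewrite bnd_simp.
Qed.

Let competitor_left_end : competitor (- L) = - m.
Proof. by rewrite /competitor set_itv1 Rintegral_set1 addr0. Qed.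

Let competitor_shift (x y : R) : - L <= x -> x <= y -> y <= L ->
  competitor y = competitor x + \int[mu]_(z in `]x, y]) competitor_slope z.
Proof.
move=> Lx xy yL; rewrite /competitor -addrA; congr (_ + _).
rewrite -(@Rintegral_itvB _ _ (BLeft (- L)) (BRight y) x) ?bnd_simp //.
  by rewrite addrC subrK.
by apply: competitor_slope_integrable_itv; rewrite ?lexx.
Qed.

Let Rintegral_competitor_slope (x y c : R) :
  (forall z, x < z <= y -> competitor_slope z = c * k z) ->
  \int[mu]_(z in `]x, y]) competitor_slope z = c * \int[mu]_(z in `[x, y]) k z.
Proof.
move=> slopeE.
have -> : \int[mu]_(z in `]x, y]) competitor_slope z =
          \int[mu]_(z in `]x, y]) (c * k z).
  by apply: eq_Rintegral => z; rewrite inE /= in_itv /=; exact: slopeE.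
have k_int : mu.-integrable `]x, y] (EFin \o k).
  apply: integrableS (continuous_integrable_itv _ x y k_continuous) => //.
  by apply: subset_itv; rewrite bnd_simp.
by rewrite RintegralZl // Rintegral_itv_obnd_cbnd.
Qed.

Lemma competitor_left (x : R) : - L <= x <= - t ->
  competitor x = - m + cl * \int[mu]_(y in `[- L, x]) k y.
Proof.
have /andP[t0 tL] := t_itv; move=> /andP[Lx xt].
rewrite (@competitor_shift (- L) x) ?lexx ?competitor_left_end //; last by lra.
rewrite (@Rintegral_competitor_slope _ _ cl) // => z /andP[_ zx].
by rewrite /competitor_slope ifT // (le_trans zx xt).
Qed.

Lemma competitor_flat (x : R) : - t <= x <= t -> competitor x = M.
Proof.
have /andP[t0 tL] := t_itv; move=> /andP[tx xt].
have Lt : - L <= - t by lra.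
rewrite (@competitor_shift (- t) x Lt tx); last by lra.
rewrite competitor_left; last by rewrite Lt lexx.
rewrite Rintegral_k_left (@Rintegral_competitor_slope _ _ 0) => [|z /andP[tz zx]].
  by rewrite mul0r addr0 /cl mulfVK ?gt_eqF //; lra.
by rewrite /competitor_slope (lt_geF tz) ltNge (le_trans zx xt) mul0r.
Qed.

Lemma competitor_right (x : R) : t <= x <= L ->
  competitor x = M + cr * \int[mu]_(y in `[t, x]) k y.
Proof.
have /andP[t0 tL] := t_itv; move=> /andP[tx xL].
have Lt : - L <= t by lra.
rewrite (@competitor_shift t x Lt tx xL) competitor_flat; last first.
  by apply/andP; split; lra.
rewrite (@Rintegral_competitor_slope _ _ cr) // => z /andP[tz zx].
have tz' : - t < z by lra.
by rewrite /competitor_slope (lt_geF tz') tz.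
Qed.

Lemma competitor_H1m : H1m L m competitor competitor_slope.
Proof.
split; first exact: measurable_funS measurable_competitor_slope.
split; first exact: competitor_slope_integrable.
split; first exact: competitor_slope_sqr_integrable.
split; first by [].
split; first exact: competitor_left_end.
have /andP[t0 tL] := t_itv.
rewrite competitor_right; last by rewrite (ltW tL) lexx.
by rewrite -/I /cr mulfVK ?gt_eqF //; lra.
Qed.

Let Rintegral_k_ratio {x y z : R} : x <= y -> y <= z ->
  \int[mu]_(w in `[x, z]) k w = I -> 0 <= \int[mu]_(w in `[x, y]) k w / I <= 1.
Proof.
move=> xy yz kI; apply/andP; split.
  by rewrite divr_ge0 ?(ltW I_gt0) // Rintegral_ge0.
by rewrite ler_pdivrMr // mul1r -kI ge0_le_Rintegral_itv // xy.
Qed.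

Hypotheses (m_ge0 : 0 <= m) (M_ge0 : 0 <= M).

(* On each ramp [competitor x] is a convex combination of the values at its ends. *)
Lemma competitor_range (x : R) : - L <= x <= L ->
  - m <= competitor x <= Num.max m M.
Proof.
have /andP[t0 tL] := t_itv; have m0 := m_ge0; have M0 := M_ge0.
move=> /andP[Lx xL].
have m_le : m <= Num.max m M by rewrite le_max lexx.
have M_le : M <= Num.max m M by rewrite le_max lexx orbT.
have [x_left|x_gt] := leP x (- t).
  have /andP[th0 th1] := Rintegral_k_ratio Lx x_left Rintegral_k_left.
  rewrite competitor_left ?Lx //.
  rewrite (_ : cl * _ = (M + m) * (\int[mu]_(y in `[- L, x]) k y / I)); last first.
    by rewrite /cl mulrAC mulrA.
  set th := _ / I in th0 th1 *; apply/andP; split; nra.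
have [x_flat|x_right] := leP x t.
  by rewrite competitor_flat; [apply/andP; split; lra | rewrite (ltW x_gt) x_flat].
have /andP[th0 th1] := Rintegral_k_ratio (ltW x_right) xL erefl.
rewrite competitor_right; last by rewrite (ltW x_right) xL.
rewrite (_ : cr * _ = (m - M) * (\int[mu]_(y in `[t, x]) k y / I)); last first.
  by rewrite /cr mulrAC mulrA.
set th := _ / I in th0 th1 *; apply/andP; split; nra.
Qed.

Variables (b G : R -> R) (G1 : R).
Hypotheses (cb : continuous b) (b_even : forall x, b (- x) = b x).
Hypothesis b_ge0 : forall x, 0 <= b x.
Hypotheses (mG : measurable_fun setT G) (G_ge0 : forall s, 0 <= G s).
Hypothesis GM : G M = 0.
Hypothesis G_le : forall s, - m <= s <= Num.max m M -> G s <= G1.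

Let density x := 2^-1 * competitor_slope x ^+ 2 * a x + G (competitor x) * b x.

Let ramp_density c x := 2^-1 * c ^+ 2 * k x + G1 * b x.

Let continuous_ramp_density c : continuous (ramp_density c).
Proof.
by apply: continuous_add; apply: continuous_cmul; [exact: k_continuous | exact: cb].
Qed.

Let density_ge0 x : 0 <= density x.
Proof.
rewrite /density; apply: addr_ge0; apply: mulr_ge0.
- by rewrite mulr_ge0 ?sqr_ge0.
- exact: ltW.
- exact: G_ge0.
- exact: b_ge0.
Qed.

Let measurable_density : measurable_fun `[- L, L] density.
Proof.
have /andP[t0 tL] := t_itv; have LL : - L <= L by lra.
have m_competitor : measurable_fun `[- L, L] competitor.
  apply: measurable_funD; first exact: measurable_cst.
  apply: subspace_continuous_measurable_fun => //.
  exact: parameterized_integral_continuous competitor_slope_integrable.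
apply: measurable_funD; apply: measurable_funM.
- apply: measurable_funM; first exact: measurable_cst.
  by apply: measurable_funX; exact: measurable_funS measurable_competitor_slope.
- exact: measurable_funS (continuous_measurable_fun ca).
- exact: measurableT_comp mG m_competitor.
- exact: measurable_funS (continuous_measurable_fun cb).
Qed.

Let density_le (x c : R) : - L <= x <= L -> competitor_slope x = c * k x ->
  density x <= ramp_density c x.
Proof.
move=> xL slopeE; apply: lerD.
  suff -> : 2^-1 * competitor_slope x ^+ 2 * a x = 2^-1 * c ^+ 2 * k x by [].
  by rewrite slopeE /k; field; exact: lt0r_neq0.
apply: ler_wpM2r; first exact: b_ge0.
by apply: G_le; exact: competitor_range.
Qed.

Let density_flat (x : R) : - t < x <= t -> density x = 0.
Proof.
move=> /andP[tx xt]; rewrite /density competitor_flat ?(ltW tx) ?xt // GM.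
by rewrite /competitor_slope (lt_geF tx) ltNge xt expr0n /= !mulr0 !mul0r addr0.
Qed.

Let integral_density_le (D : set R) (c : R) : measurable D -> D `<=` `[- L, L] ->
  (forall x, D x -> competitor_slope x = c * k x) ->
  (\int[mu]_(x in D) (density x)%:E <= \int[mu]_(x in D) (ramp_density c x)%:E)%E.
Proof.
move=> mD DL slopeE; apply: ge0_le_integral => //.
- by move=> x _; rewrite lee_fin.
- by apply/measurable_EFinP; exact: measurable_funS measurable_density.
- apply/measurable_EFinP.
  exact: measurable_funS (continuous_measurable_fun (continuous_ramp_density c)).
- by move=> x Dx; rewrite lee_fin density_le //; [exact: DL | exact: slopeE].
Qed.

Let Rintegral_ramp_density c : \int[mu]_(x in `[t, L]) ramp_density c x =
  2^-1 * c ^+ 2 * I + G1 * \int[mu]_(x in `[t, L]) b x.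
Proof.
have int_cmul (f : R -> R) (c' : R) : continuous f ->
    mu.-integrable `[t, L] (EFin \o (fun x => c' * f x)).
  by move=> cf; apply: continuous_integrable_itv; exact: continuous_cmul.
rewrite RintegralD ?int_cmul // !RintegralZl //; exact: continuous_integrable_itv.
Qed.

Let integral_density_left : (\int[mu]_(x in `[(- L)%R, (- t)%R]) (density x)%:E <=
  (\int[mu]_(x in `[t, L]) ramp_density cl x)%:E)%E.
Proof.
have /andP[t0 tL] := t_itv.
rewrite -Rintegral_itvN //; last exact: ltW.
rewrite -continuous_integral_itvE //; apply: integral_density_le => //.
- by apply: subset_itv; rewrite bnd_simp; lra.
- by move=> x /=; rewrite in_itv /= => /andP[_ xt]; rewrite /competitor_slope xt.
- by move=> x; rewrite /ramp_density k_even b_even.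
Qed.

Let integral_density_right : (\int[mu]_(x in `]t, L]) (density x)%:E <=
  (\int[mu]_(x in `[t, L]) ramp_density cr x)%:E)%E.
Proof.
have /andP[t0 tL] := t_itv.
rewrite -continuous_integral_itvE // -integral_itv_obnd_cbnd; last first.
  apply/measurable_EFinP.
  exact: measurable_funS (continuous_measurable_fun (continuous_ramp_density cr)).
apply: integral_density_le => //.
- by apply: subset_itv; rewrite bnd_simp; lra.
- move=> x /=; rewrite in_itv /= => /andP[tx _].
  by rewrite /competitor_slope lt_geF ?tx //; lra.
Qed.

Lemma energy_competitor_le :
  (energy a b G L competitor competitor_slope <=
   ((M ^+ 2 + m ^+ 2) / I + 2 * G1 * \int[mu]_(x in `[t, L]) b x)%:E)%E.
Proof.
have /andP[t0 tL] := t_itv.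
have -> : energy a b G L competitor competitor_slope =
  (\int[mu]_(x in `[(- L)%R, L]) (density x)%:E)%E by [].
have Lt : (BLeft (- L) <= BRight (- t))%O by rewrite bnd_simp; lra.
have tt : (BRight (- t) <= BRight t)%O by rewrite bnd_simp; lra.
rewrite (ge0_integral_itv_split density_ge0 Lt _ measurable_density); last by lra.
rewrite (ge0_integral_itv_split density_ge0 tt (ltW tL)); last first.
  apply: measurable_funS measurable_density => //.
  by apply: subset_itv; rewrite bnd_simp; lra.
rewrite [X in (_ + (X + _))%E]integral0_eq ?add0e; last first.
  by move=> x; rewrite /= in_itv /= => /(density_flat x) ->.
apply: le_trans (leeD integral_density_left integral_density_right) _.
rewrite -EFinD lee_fin !Rintegral_ramp_density /cl /cr le_eqVlt.
by apply/predU1P; left; field; exact: lt0r_neq0.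
Qed.

End competitor.

Theorem proposition5p2 (R : realType) (a b G : R -> R) (M L m t : R) :
  continuous a -> continuous b -> continuous G ->
  (forall x, a (- x) = a x) -> (forall x, b (- x) = b x) ->
  (forall x, G (- x) = G x) ->
  (forall x, 0 < a x) -> (forall x, 0 < b x) ->
  0 < M -> G M = 0 -> (forall s, G M <= G s) ->
  (forall s, 0 <= s < M -> 0 < G s) ->
  0 < L -> 0 <= m -> 0 <= t < L ->
  let Mbar := Num.max m M in
  let G1 := sup [set G s | s in `]- m, Mbar[] in
  (inf_energy a b G L m <=
    ((M ^+ 2 + m ^+ 2) / (\int[@lebesgue_measure R]_(x in `[t, L]) (a x)^-1)
     + 2 * G1 * (\int[@lebesgue_measure R]_(x in `[t, L]) b x))%:E)%E.
Proof.
move=> ca cb cG ea eb _ a_gt0 b_gt0 M_gt0 GM G_min _ _ m_ge0 t_itv.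
have m_lt_Mbar : - m < Num.max m M by rewrite lt_max; apply/orP; right; lra.
set u := competitor a L t M m; set g := competitor_slope a L t M m.
apply: ereal_inf_le; exists (energy a b G L u g).
  by exists u, g; split; first exact: competitor_H1m.
apply: energy_competitor_le => //.
- exact: ltW.
- by move=> x; exact: ltW.
- exact: continuous_measurable_fun.
- by move=> s; rewrite -GM.
- by move=> s; exact: continuous_le_sup_itv_oo.
Qed.
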